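(* Let $(S,\oplus,\odot)$ be a semiring whose addition $\oplus$ is commutative (multiplication $\odot$ need not be commutative). For all positive integers $n,p,q$ with $p+q\le n$ and all maps $f:\binom{[n]}{p}\to S$, $g:\binom{[n]}{q}\to S$, the value $$\bigoplus_{X\in\binom{[n]}{p},\,Y\in\binom{[n]}{q},\,X\cap Y=\emptyset} f(X)\odot g(Y)$$ can be computed by an arithmetic circuit over $\oplus,\odot$ with $O((n^p+n^q)\log n)$ gates, where the constant in the $O$-notation does not depend on $n,p,q$.
   Context: $\binom{[n]}{p}$ denotes the family of $p$-element subsets of $[n]=\{1,\dots,n\}$. An arithmetic circuit has input gates for the values $f(X)$ and $g(Y)$ and binary gates each computing $\oplus$ or $\odot$ (with left/right order of the $\odot$ arguments specified) of its two predecessors. *)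

From HB Require Import structures.
From mathcomp Require Import all_boot all_order all_algebra.
Set Implicit Arguments. Unset Strict Implicit. Unset Printing Implicit Defensive.
Import GRing.Theory.
Local Open Scope ring_scope.

Definition ksub (n k : nat) := {X : {set 'I_n} | #|X| == k}.

(* A circuit is a
   sequence of gates; gate number k is either an input gate reading f(X)
   (X a p-subset) or g(Y) (Y a q-subset), or a binary gate
   Add i j (= v_i (+) v_j) / Mul i j (= v_i (.) v_j, in this order)
   whose predecessors i, j are earlier gates (i, j < k). *)
Inductive gate (n p q : nat) :=
| InF of ksub n p
| InG of ksub n q
| AddG of nat & nat
| MulG of nat & nat.

Definition circuit n p q := seq (gate n p q).

Definition wf_gate n p q (k : nat) (G : gate n p q) : bool :=
  match G with
  | AddG i j | MulG i j => ((i < k) && (j < k))%N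
  | _ => true
  end.

Definition wf_circuit n p q (c : circuit n p q) : bool :=
  all (fun kg => wf_gate kg.1 kg.2) (zip (iota 0 (size c)) c).

Section Eval.
Variables (S : pzSemiRingType) (n p q : nat).
Variables (f : ksub n p -> S) (g : ksub n q -> S).

Definition gate_val (vs : seq S) (G : gate n p q) : S :=
  match G with
  | InF X => f X
  | InG Y => g Y
  | AddG i j => nth 0 vs i + nth 0 vs j
  | MulG i j => nth 0 vs i * nth 0 vs j
  end.

Definition circuit_vals (c : circuit n p q) : seq S :=
  foldl (fun vs G => rcons vs (gate_val vs G)) [::] c.

Definition circuit_out (c : circuit n p q) : S := last 0 (circuit_vals c).

Definition disjoint_prod_sum : S :=
  \sum_(X : ksub n p) \sum_(Y : ksub n q | [disjoint val X & val Y]) f X * g Y.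
End Eval.

From HB Require Import structures.
From mathcomp Require Import all_boot all_order all_algebra.
From mathcomp Require Import zify ring.
Set Implicit Arguments. Unset Strict Implicit. Unset Printing Implicit Defensive.
Import GRing.Theory.

(* Arrange the leaves [n] as a complete binary tree of depth d = log n + 1.
   For a level l, a set B of at most q nodes of level l and a set Z of at
   most p leaves below B, let  F_l(B, Z) = (+){ f(X) | X meets the leaves
   below B exactly in Z }.  At level 0, F_0 sums input gates; at level l+1,
   F_{l+1}(B', Z') is the sum of the F_l(parents B', Z) over the Z whose trace
   below B' is Z' (the X are partitioned by their trace below [parents B']).
   At the leaf level, F_d(Y, {}) = (+){ f(X) | X disjoint from Y }, and the
   result is (+)_Y F_d(Y, {}) (.) g(Y). *)

Section Evaluation.
Variables (n p q : nat) (S : pzSemiRingType).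
Variables (f : ksub n p -> S) (g : ksub n q -> S).
Local Open Scope ring_scope.

Definition vals (c : circuit n p q) : seq S := circuit_vals f g c.

Lemma wf_circuit_rcons (c : circuit n p q) G :
  wf_circuit (rcons c G) = wf_circuit c && wf_gate (size c) G.
Proof.
rewrite /wf_circuit size_rcons -addn1 iotaD add0n -cats1.
by rewrite zip_cat ?size_iota // all_cat /= andbT.
Qed.

Lemma vals_rcons c G : vals (rcons c G) = rcons (vals c) (gate_val f g (vals c) G).
Proof. by rewrite /vals /circuit_vals foldl_rcons. Qed.

Lemma size_vals c : size (vals c) = size c.
Proof. by elim/last_ind: c => [//|c G IH]; rewrite vals_rcons !size_rcons IH. Qed.

Lemma nth_vals_cat c e i : (i < size c)%N -> nth 0 (vals (c ++ e)) i = nth 0 (vals c) i.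
Proof.
move=> lt_i; elim/last_ind: e => [|e G IH]; first by rewrite cats0.
rewrite -rcons_cat vals_rcons nth_rcons size_vals size_cat.
by rewrite (leq_trans lt_i (leq_addr _ _)) IH.
Qed.

Lemma nth_vals_last c G : nth 0 (vals (rcons c G)) (size c) = gate_val f g (vals c) G.
Proof. by rewrite vals_rcons nth_rcons size_vals ltnn eqxx. Qed.

(* A location [o : option nat] holds a value [v]: [Some i] is gate [i], and
   [None] stands for the value 0 of an empty sum (there is no constant gate).
   The flag [nz] records a sum over a nonempty range, whose location is a gate. *)
Definition located (c : circuit n p q) (o : option nat) (v : S) (nz : bool) :=
  match o with
  | None => v = 0 /\ ~~ nz
  | Some i => (i < size c)%N /\ nth 0 (vals c) i = v
  end.

Lemma located_cat c e o v nz : located c o v nz -> located (c ++ e) o v nz.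
Proof.
case: o => [i [lt_i <-]|//]; rewrite /located size_cat nth_vals_cat //.
by rewrite (leq_trans lt_i (leq_addr _ _)).
Qed.

End Evaluation.

Section Combinators.
Variables (n p q : nat).
Notation circ := (circuit n p q).

Definition extends (c c' : circ) := exists e, c' = c ++ e.

Lemma extends_refl c : extends c c.
Proof. by exists [::]; rewrite cats0. Qed.

Lemma extends_trans c1 c2 c3 : extends c1 c2 -> extends c2 c3 -> extends c1 c3.
Proof. by move=> [e1 ->] [e2 ->]; exists (e1 ++ e2); rewrite catA. Qed.

Lemma extends_rcons c G : extends c (rcons c G).
Proof. by exists [:: G]; rewrite cats1. Qed.

Fixpoint add_chain (c : circ) (a : nat) (l : seq nat) : circ * nat :=
  if l is j :: l' then add_chain (rcons c (AddG n p q a j)) (size c) l' else (c, a).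

Definition add_locs (c : circ) (l : seq (option nat)) : circ * option nat :=
  if pmap id l is i :: r then ((add_chain c i r).1, Some (add_chain c i r).2)
  else (c, None).

Fixpoint sum_layer (K : eqType) (c : circ) (ks : seq K) (srcs : K -> seq (option nat))
  : circ * (K -> option nat) :=
  if ks is k :: ks' then
    let r := add_locs c (srcs k) in
    let r' := sum_layer r.1 ks' srcs in
    (r'.1, fun k' => if k' == k then r.2 else r'.2 k')
  else (c, fun _ => None).

Fixpoint push_inputs (A : eqType) (c : circ) (xs : seq A) (mk : A -> gate n p q)
  : circ * (A -> option nat) :=
  if xs is x :: xs' then
    let r := push_inputs (rcons c (mk x)) xs' mk in
    (r.1, fun x' => if x' == x then Some (size c) else r.2 x')
  else (c, fun _ => None).

Fixpoint product_chain (A : Type) (c : circ) (acc : nat) (ys : seq A) (hl gl : A -> nat)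
  : circ :=
  if ys is y :: ys' then
    let c1 := rcons c (MulG n p q (hl y) (gl y)) in
    product_chain (rcons c1 (AddG n p q acc (size c))) (size c1) ys' hl gl
  else c.

Variables (S : pzSemiRingType) (f : ksub n p -> S) (g : ksub n q -> S).
Local Open Scope ring_scope.
Notation vals := (vals f g).
Notation located := (located f g).

Lemma located_extends c c' o v nz :
  extends c c' -> located c o v nz -> located c' o v nz.
Proof. by move=> [e ->]; apply: located_cat. Qed.

Lemma add_chain_spec c a l :
  wf_circuit c -> (a < size c)%N -> all (fun j => j < size c)%N l ->
  let cr := add_chain c a l in
  [/\ wf_circuit cr.1, extends c cr.1, size cr.1 = (size c + size l)%N,
      (cr.2 < size cr.1)%N &
      nth 0 (vals cr.1) cr.2 = nth 0 (vals c) a + \sum_(j <- l) nth 0 (vals c) j].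
Proof.
elim: l c a => [|j l IH] c a wf_c lt_a /= lt_l.
  by rewrite addn0 big_nil addr0; split=> //; apply: extends_refl.
case/andP: lt_l => lt_j lt_l; set c1 := rcons c _.
have size_c1 : size c1 = (size c).+1 by rewrite size_rcons.
have wf_c1 : wf_circuit c1 by rewrite wf_circuit_rcons wf_c /= lt_a lt_j.
have lt_l1 : all (fun j => j < size c1)%N l.
  by apply: sub_all lt_l => x; rewrite size_c1 => /ltnW.
have lt_c : (size c < size c1)%N by rewrite size_c1.
have [wf ext sz lt v] := IH c1 (size c) wf_c1 lt_c lt_l1.
split=> //; first exact: extends_trans (extends_rcons _ _) ext.
  by rewrite sz size_c1 addSnnS.
rewrite v nth_vals_last big_cons addrA /=; congr (_ + _).
rewrite !big_seq; apply: eq_bigr => x x_l.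
by rewrite /c1 -cats1 nth_vals_cat //; apply: (allP lt_l).
Qed.

Lemma sum_located (T : eqType) (xs : seq T) (lo : T -> option nat) (vo : T -> S)
    (nz : T -> bool) c :
  (forall x, x \in xs -> located c (lo x) (vo x) (nz x)) ->
  [/\ \sum_(x <- xs) vo x = \sum_(i <- pmap id (map lo xs)) nth 0 (vals c) i,
      all (fun j => j < size c)%N (pmap id (map lo xs)) &
      has nz xs -> pmap id (map lo xs) != [::]].
Proof.
elim: xs => [|x xs IH] loc_xs /=; first by rewrite !big_nil.
have [sum_xs lt_xs nz_xs] := IH (fun y y_xs => loc_xs y (@mem_behead _ (x :: xs) _ y_xs)).
move: (loc_xs x (mem_head _ _)); rewrite big_cons.
case: (lo x) => [i [lt_i <-]|[-> nz_x]] /=; first by rewrite big_cons sum_xs lt_i lt_xs.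
by rewrite add0r sum_xs lt_xs (negbTE nz_x).
Qed.

Lemma add_locs_spec (T : eqType) (xs : seq T) (lo : T -> option nat) (vo : T -> S)
    (nz : T -> bool) c :
  wf_circuit c -> (forall x, x \in xs -> located c (lo x) (vo x) (nz x)) ->
  let cr := add_locs c (map lo xs) in
  [/\ wf_circuit cr.1, extends c cr.1, (size cr.1 <= size c + size xs)%N
    & located cr.1 cr.2 (\sum_(x <- xs) vo x) (has nz xs)].
Proof.
move=> wf_c loc_xs; have [-> lt_l nz_l] := sum_located loc_xs.
have size_l : (size (pmap id (map lo xs)) <= size xs)%N.
  by rewrite size_pmap -(size_map lo) count_size.
rewrite /add_locs; case: (pmap id (map lo xs)) size_l lt_l nz_l => [|i r] size_l /= lt_l nz_l.
  split; [done | exact: extends_refl | exact: leq_addr |].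
  by rewrite big_nil; split=> //; apply/negP => /nz_l.
case/andP: lt_l => lt_i lt_r; have [wf ext sz lt v] := add_chain_spec wf_c lt_i lt_r.
split=> //; first by rewrite sz leq_add2l ltnW.
by split=> //; rewrite big_cons -v.
Qed.

Lemma sum_layer_spec (K K0 : eqType) (ks : seq K) (srcs : K -> seq K0)
    (lo : K0 -> option nat) (vo : K0 -> S) (nz : K0 -> bool) c :
  wf_circuit c ->
  (forall k s, k \in ks -> s \in srcs k -> located c (lo s) (vo s) (nz s)) ->
  let r := sum_layer c ks (fun k => map lo (srcs k)) in
  [/\ wf_circuit r.1, extends c r.1,
      (size r.1 <= size c + \sum_(k <- ks) size (srcs k))%N
    & forall k, k \in ks -> located r.1 (r.2 k) (\sum_(s <- srcs k) vo s) (has nz (srcs k))].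
Proof.
elim: ks c => [|k ks IH] c wf_c loc_srcs /=.
  by rewrite big_nil addn0; split=> //; apply: extends_refl.
have [wf1 ext1 sz1 loc1] := add_locs_spec wf_c (loc_srcs k ^~ (mem_head _ _)).
have [wf2 ext2 sz2 loc2] := IH _ wf1 (fun k' s k'_ks s_src =>
  located_extends ext1 (loc_srcs k' s (@mem_behead _ (k :: ks) _ k'_ks) s_src)).
split=> //; first exact: extends_trans ext1 ext2.
  by rewrite big_cons addnA (leq_trans sz2) // leq_add2r.
move=> k'; rewrite inE; case: eqP => [-> _|_ /= k'_ks]; last exact: loc2.
exact: located_extends ext2 loc1.
Qed.

Lemma push_inputs_spec (A : eqType) (xs : seq A) (mk : A -> gate n p q) (vx : A -> S) c :
  wf_circuit c -> (forall x k, wf_gate k (mk x)) ->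
  (forall vs x, gate_val f g vs (mk x) = vx x) ->
  let r := push_inputs c xs mk in
  [/\ wf_circuit r.1, extends c r.1, size r.1 = (size c + size xs)%N
    & forall x, x \in xs -> located r.1 (r.2 x) (vx x) true].
Proof.
move=> + wf_mk val_mk; elim: xs c => [|x xs IH] c wf_c /=.
  by rewrite addn0; split=> //; apply: extends_refl.
have wf1 : wf_circuit (rcons c (mk x)) by rewrite wf_circuit_rcons wf_c wf_mk.
have [wf2 ext2 sz2 loc2] := IH _ wf1.
split=> //; first exact: extends_trans (extends_rcons _ _) ext2.
  by rewrite sz2 size_rcons addSnnS.
move=> x'; rewrite inE; case: eqP => [-> _|_ /= x'_xs]; last exact: loc2.
apply: located_extends ext2 _; split; first by rewrite size_rcons.
by rewrite nth_vals_last val_mk.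
Qed.

Lemma product_chain_spec (A : eqType) (ys : seq A) (hl gl : A -> nat) (hv gv : A -> S) c acc :
  wf_circuit c -> acc.+1 = size c ->
  (forall y, y \in ys -> located c (Some (hl y)) (hv y) true /\
                         located c (Some (gl y)) (gv y) true) ->
  let c' := product_chain c acc ys hl gl in
  [/\ wf_circuit c', size c' = (size c + 2 * size ys)%N, (0 < size c')%N &
      last 0 (vals c') = nth 0 (vals c) acc + \sum_(y <- ys) hv y * gv y].
Proof.
elim: ys c acc => [|y ys IH] c acc wf_c acc_last loc_ys /=.
  rewrite muln0 addn0 big_nil addr0 -acc_last; split=> //.
  by rewrite -nth_last size_vals -acc_last.
have [[lt_h val_h] [lt_g val_g]] := loc_ys y (mem_head _ _).
set c1 := rcons c _; set c2 := rcons c1 _.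
have ext2 : c2 = c ++ [:: MulG n p q (hl y) (gl y); AddG n p q acc (size c)].
  by rewrite /c2 /c1 -!cats1 -catA.
have size_c1 : size c1 = (size c).+1 by rewrite size_rcons.
have wf2 : wf_circuit c2.
  by rewrite /c2 !wf_circuit_rcons wf_c /= lt_h lt_g size_c1 -acc_last; lia.
have loc2 y' : y' \in ys -> located c2 (Some (hl y')) (hv y') true /\
                           located c2 (Some (gl y')) (gv y') true.
  by move=> y'_ys; rewrite ext2; have [lh lg] := loc_ys y' (@mem_behead _ (y :: ys) _ y'_ys);
    split; apply: located_cat.
have c2_last : (size c1).+1 = size c2 by rewrite /c2 size_rcons.
have [wf sz pos ->] := IH c2 (size c1) wf2 c2_last loc2.
split=> //; first by rewrite sz ext2 size_cat mulnS addnA.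
rewrite big_cons addrA /c2 nth_vals_last /= /c1 nth_vals_last /=.
by rewrite -cats1 !nth_vals_cat ?val_h ?val_g // -acc_last.
Qed.

End Combinators.

Lemma card_preim_div n (phi : 'I_n -> 'I_n) s (B : {set 'I_n}) : (0 < s)%N ->
  (forall x, val (phi x) = x %/ s) -> (#|phi @^-1: B| <= #|B| * s)%N.
Proof.
move=> s_gt0 phiE; rewrite -sum1_card (partition_big phi (mem B)); last by move=> x; rewrite inE.
rewrite -sum_nat_const leq_sum // => b _; rewrite sum1_card.
pose rem (x : 'I_n) : 'I_s := Ordinal (ltn_pmod x s_gt0).
apply: leq_trans (@leq_card_in _ _ rem _ _) _; last by rewrite card_ord.
move=> x y /andP[_ /eqP phix] /andP[_ /eqP phiy] /(congr1 val) /= eq_rem.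
by apply: ord_inj; rewrite (divn_eq x s) (divn_eq y s) eq_rem -!phiE phix phiy.
Qed.

(* The leaves 0, ..., n-1 are those of a complete binary tree of depth
   [depth n]: the level-[l] ancestor of leaf [x] is [x %/ 2 ^ (depth n - l)],
   a node [b < 2 ^ l], and the nodes of level [depth n] are the leaves. *)
Section Tree.
Variable n : nat.

Definition depth := (trunc_log 2 n).+1.

Definition width l := (2 ^ (depth - l))%N.

Definition anc l (x : 'I_n) : 'I_n :=
  Ordinal (leq_ltn_trans (leq_div x (width l)) (ltn_ord x)).

Definition parent (b : 'I_n) : 'I_n := Ordinal (leq_ltn_trans (leq_div b 2) (ltn_ord b)).

Definition parents (B : {set 'I_n}) := parent @: B.

Definition level l := [set b : 'I_n | (b < 2 ^ l)%N].

Definition leaves l (B : {set 'I_n}) : {set 'I_n} := [set x | anc l x \in B].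

Lemma anc_parent l x : (l < depth)%N -> anc l x = parent (anc l.+1 x).
Proof.
move=> lt_l; apply: val_inj => /=; rewrite /width -divnMA -expnSr.
by congr (_ %/ 2 ^ _); rewrite subnSK.
Qed.

Lemma leaves_parents l B : (l < depth)%N -> leaves l.+1 B \subset leaves l (parents B).
Proof. by move=> lt_l; apply/subsetP=> x; rewrite !inE (anc_parent x lt_l); apply: imset_f. Qed.

Lemma leaves_depth B : leaves depth B = B.
Proof.
apply/setP=> x; rewrite inE; congr (_ \in B); apply: val_inj.
by rewrite /= /width subnn expn0 divn1.
Qed.

Lemma parents_level l (B : {set 'I_n}) : B \subset level l.+1 -> parents B \subset level l.
Proof.
move/subsetP=> sub_B; apply/subsetP=> _ /imsetP[x /sub_B + ->].
by rewrite !inE /= ltn_divLR // expnSr.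
Qed.

Lemma level_depth : level depth = setT.
Proof.
apply/setP=> x; rewrite !inE (leq_trans (ltn_ord x)) //.
by rewrite ltnW // trunc_log_ltn.
Qed.

Lemma card_level l : (#|level l| <= 2 ^ l)%N.
Proof.
rewrite cardE -(size_map val) -(size_iota 0 (2 ^ l)).
apply: uniq_leq_size; first by rewrite (map_inj_uniq val_inj) enum_uniq.
by move=> x /mapP[b]; rewrite mem_enum inE => lt_b ->; rewrite mem_iota.
Qed.

Lemma card_leaves l B : (#|leaves l B| <= #|B| * width l)%N.
Proof.
have -> : leaves l B = anc l @^-1: B by apply/setP=> x; rewrite !inE.
by apply: card_preim_div => //; rewrite expn_gt0.
Qed.

Lemma card_children (B : {set 'I_n}) : (#|parent @^-1: B| <= #|B| * 2)%N.
Proof. exact: card_preim_div. Qed.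

Lemma level_width l : (0 < n)%N -> (l <= depth)%N -> (2 ^ l * width l <= 2 * n)%N.
Proof.
move=> n_gt0 le_l; rewrite /width -expnD subnKC // /depth expnS leq_mul2l.
exact: trunc_logP.
Qed.

End Tree.

Lemma sum_regroup (S : pzSemiRingType) (T : finType) (K : eqType) (F : T -> S)
    (ss : seq K) (R0 : K -> T -> bool) (R : pred T) (s0 : T -> K) :
  uniq ss -> (forall X, R X -> s0 X \in ss /\ R0 (s0 X) X) ->
  (forall X s, s \in ss -> R0 s X -> s = s0 X /\ R X) ->
  (\sum_(s <- ss) \sum_(X | R0 s X) F X = \sum_(X | R X) F X)%R /\
  has (fun s => [exists X, R0 s X]) ss = [exists X, R X].
Proof.
move=> uniq_ss s0_ok R0_s0; split.
  rewrite (exchange_big_dep predT) //= [RHS]big_mkcond /=; apply: eq_bigr => X _.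
  rewrite -big_filter; case RX: (R X).
    have [s0_ss _] := s0_ok X RX.
    rewrite (@eq_in_filter _ _ (pred1 (s0 X))) ?filter_pred1_uniq ?big_seq1 //.
    by move=> s s_ss /=; apply/idP/eqP => [/(R0_s0 X s s_ss)[]|->]; last by case: (s0_ok X RX).
  rewrite (@eq_in_filter _ _ pred0) ?filter_pred0 ?big_nil // => s s_ss /=.
  by apply/negP => /(R0_s0 X s s_ss)[_]; rewrite RX.
apply/hasP/existsP => [[s s_ss /existsP[X /(R0_s0 X s s_ss)[_ RX]]]|[X RX]].
  by exists X.
by have [s0_ss R0X] := s0_ok X RX; exists (s0 X); last (apply/existsP; exists X).
Qed.

Lemma exists_subset_card (T : finType) (A : {set T}) k : (k <= #|A|)%N ->
  exists2 X : {set T}, X \subset A & #|X| = k.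
Proof.
move=> le_k; exists [set x in take k (enum A)].
  by apply/subsetP=> x; rewrite inE => /mem_take; rewrite mem_enum.
rewrite cardsE (card_uniqP _) ?take_uniq ?enum_uniq // size_take -cardE.
by case: ltnP => // ge_k; apply/eqP; rewrite eqn_leq le_k ge_k.
Qed.

(* A key [(B, Z)] of level [l] consists of at most [q] nodes
   [B] of level [l] and at most [p] leaves [Z] below [B]; its gate holds the
   sum of [f X] over the [X] whose trace on the leaves below [B] is [Z]. *)
Section Construction.
Variables (n p q : nat).

Definition key := ({set 'I_n} * {set 'I_n})%type.

Definition key_ok l (k : key) :=
  [&& k.1 \subset level n l, (#|k.1| <= q)%N, k.2 \subset leaves l k.1 & (#|k.2| <= p)%N].

Definition keys l := enum [pred k : key | key_ok l k].

Definition matches l (k : key) (X : ksub n p) := val X :&: leaves l k.1 == k.2.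

Definition root_sources (k : key) := [seq X <- enum {: ksub n p} | matches 0 k X].

Definition sources l (k : key) :=
  [seq k0 <- keys l | (k0.1 == parents k.1) && (k0.2 :&: leaves l.+1 k.1 == k.2)].

Definition f_inputs := push_inputs ([::] : circuit n p q) (enum {: ksub n p}) (fun X => InF q X).

Fixpoint tree l : circuit n p q * (key -> option nat) :=
  if l is l'.+1 then
    let r := tree l' in sum_layer r.1 (keys l) (fun k => map r.2 (sources l' k))
  else sum_layer f_inputs.1 (keys 0) (fun k => map f_inputs.2 (root_sources k)).

Definition g_inputs := push_inputs (tree (depth n)).1 (enum {: ksub n q}) (fun Y => InG p Y).

Definition f_gate (Y : ksub n q) := odflt 0%N ((tree (depth n)).2 (val Y, set0)).

Definition g_gate (Y : ksub n q) := odflt 0%N (g_inputs.2 Y).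

Definition full_circuit : circuit n p q :=
  if enum {: ksub n q} is Y0 :: Ys then
    product_chain (rcons g_inputs.1 (MulG n p q (f_gate Y0) (g_gate Y0)))
      (size g_inputs.1) Ys f_gate g_gate
  else g_inputs.1.

(* number of additions spent on level 0, resp. on level [l+1] *)
Definition root_cost := (\sum_(k <- keys 0) size (root_sources k))%N.
Definition layer_cost l := (\sum_(k <- keys l.+1) size (sources l k))%N.

Lemma mem_keys l k : (k \in keys l) = key_ok l k.
Proof. by rewrite mem_enum. Qed.

Lemma card_ksub k (X : ksub n k) : #|val X| = k.
Proof. by apply/eqP; case: X. Qed.

Lemma exists_ksub k (A : {set 'I_n}) : (k <= #|A|)%N -> exists X : ksub n k, val X \subset A.
Proof.
by move=> /exists_subset_card[X sub_X /eqP card_X]; exists (exist _ X card_X).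
Qed.

(* the level-[l] keys refining a key of level [l+1] partition its [X] *)
Lemma sources_regroup (S : pzSemiRingType) (f : ksub n p -> S) l k :
  (l < depth n)%N -> k \in keys l.+1 ->
  (\sum_(k0 <- sources l k) \sum_(X | matches l k0 X) f X = \sum_(X | matches l.+1 k X) f X)%R /\
  has (fun k0 => [exists X, matches l k0 X]) (sources l k) = [exists X, matches l.+1 k X].
Proof.
move=> lt_l; rewrite mem_keys => /and4P[lvl_k card_k _ _].
have sub_k := leaves_parents k.1 lt_l.
pose s0 (X : ksub n p) := (parents k.1, val X :&: leaves l (parents k.1)).
apply: (@sum_regroup _ _ _ _ _ _ _ s0); first by rewrite filter_uniq ?enum_uniq.
  move=> X /eqP mX; split; last by rewrite /matches /s0 /= eqxx.
  rewrite mem_filter /s0 /= eqxx -setIA (setIidPr sub_k) mX eqxx mem_keys /key_ok /=.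
  rewrite parents_level // (leq_trans (leq_imset_card _ _) card_k) subsetIr /=.
  by rewrite (leq_trans (subset_leq_card (subsetIl _ _))) // card_ksub.
move=> X [B Z]; rewrite mem_filter /= => /andP[/andP[/eqP eB /eqP eZ] _].
rewrite /matches /= => /eqP mX.
split; first by rewrite /s0 -eB mX.
by rewrite -eZ -mX -setIA eB (setIidPr sub_k).
Qed.

End Construction.

Section Correctness.
Variables (n p q : nat) (S : pzSemiRingType) (f : ksub n p -> S) (g : ksub n q -> S).
Local Open Scope ring_scope.

Definition trace_sum l (k : key n) := \sum_(X : ksub n p | matches l k X) f X.

Lemma tree_spec l : (l <= depth n)%N ->
  let r := tree n p q l in
  [/\ wf_circuit r.1,
      (size r.1 <= #|{: ksub n p}| + root_cost n p q + \sum_(i < l) layer_cost n p q i)%N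
    & forall k, k \in keys n p q l ->
      located f g r.1 (r.2 k) (trace_sum l k) [exists X : ksub n p, matches l k X]].
Proof.
elim: l => [|l IH] le_l /=.
  have wf_nil : wf_circuit ([::] : circuit n p q) by [].
  have [wf0 _ size0 loc0] := @push_inputs_spec n p q S f g _ (enum {: ksub n p})
    (fun X => InF q X) f _ wf_nil (fun _ _ => erefl) (fun _ _ => erefl).
  have [wf1 _ size1 loc1] := @sum_layer_spec n p q S f g _ _ (keys n p q 0)
    (@root_sources n p) (f_inputs n p q).2 f (fun _ => true) _ wf0
    (fun k X _ _ => loc0 X (mem_enum _ X)).
  split=> //; first by rewrite big_ord0 addn0 (leq_trans size1) // size0 -cardE.
  move=> k k_keys; have := loc1 k k_keys.
  rewrite /root_sources big_filter big_enum_cond /trace_sum /=.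
  suff -> : has predT [seq X <- enum {: ksub n p} | matches 0 k X] =
            [exists X : ksub n p, matches 0 k X] by [].
  apply/hasP/existsP => [[X]|[X mX]]; first by rewrite mem_filter => /andP[mX _]; exists X.
  by exists X; rewrite // mem_filter mX mem_enum.
have [wf1 size1 loc1] := IH (ltnW le_l).
have src_keys k k0 : k0 \in sources p q l k -> k0 \in keys n p q l.
  by rewrite mem_filter => /andP[].
have [wf2 _ size2 loc2] := @sum_layer_spec n p q S f g _ _ (keys n p q l.+1)
  (@sources n p q l) (tree n p q l).2 (trace_sum l)
  (fun k => [exists X : ksub n p, matches l k X]) _ wf1
  (fun k k0 _ k0_src => loc1 k0 (src_keys k k0 k0_src)).
split=> //; first by rewrite (leq_trans size2) // big_ord_recr /= addnA leq_add2r.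
move=> k k_keys; have [sumE hasE] := sources_regroup f le_l k_keys.
by have := loc2 k k_keys; rewrite /trace_sum sumE hasE.
Qed.

Lemma disjoint_prod_sumE :
  disjoint_prod_sum f g = \sum_(Y <- enum {: ksub n q}) trace_sum (depth n) (val Y, set0) * g Y.
Proof.
rewrite /disjoint_prod_sum (exchange_big_dep predT) //= big_enum /=.
apply: eq_bigr => Y _; rewrite mulr_suml; apply: eq_bigl => X.
by rewrite /matches /= leaves_depth setI_eq0.
Qed.

Hypothesis le_pq_n : (p + q <= n)%N.

Lemma exists_disjoint (Y : ksub n q) : [exists X : ksub n p, matches (depth n) (val Y, set0) X].
Proof.
have le_p : (p <= #|~: val Y|)%N.
  have := cardsC (val Y); rewrite card_ord card_ksub => card_Yc.
  by rewrite -(leq_add2l q) card_Yc addnC.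
have [X sub_X] := exists_ksub le_p; apply/existsP; exists X.
by rewrite /matches /= leaves_depth setI_eq0 disjoints_subset.
Qed.

Lemma g_inputs_spec :
  let c := (g_inputs n p q).1 in
  [/\ wf_circuit c, size c = (size (tree n p q (depth n)).1 + #|{: ksub n q}|)%N,
      forall Y : ksub n q,
        located f g c (Some (f_gate p Y)) (trace_sum (depth n) (val Y, set0)) true &
      forall Y : ksub n q, located f g c (Some (g_gate p Y)) (g Y) true].
Proof.
have [wf_t _ loc_t] := tree_spec (leqnn (depth n)).
have [wf_g ext_g size_g loc_g] := @push_inputs_spec n p q S f g _ (enum {: ksub n q})
  (fun Y => InG p Y) g _ wf_t (fun _ _ => erefl) (fun _ _ => erefl).
split=> [//||Y|Y]; first by rewrite size_g cardE.
  have key_Y : (val Y, set0) \in keys n p q (depth n).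
    by rewrite mem_keys /key_ok /= level_depth subsetT card_ksub leqnn sub0set cards0.
  have := located_extends ext_g (loc_t _ key_Y); rewrite exists_disjoint /f_gate.
  by case: ((tree n p q (depth n)).2 _) => [i loc|[]]; first exact: loc.
have := loc_g Y (mem_enum _ Y); rewrite /g_gate.
by case: ((g_inputs n p q).2 Y) => [i loc|[]]; first exact: loc.
Qed.

Lemma full_circuit_spec :
  let c := full_circuit n p q in
  [/\ wf_circuit c, (0 < size c)%N,
      (size c <= #|{: ksub n p}| + root_cost n p q + \sum_(i < depth n) layer_cost n p q i
                 + 3 * #|{: ksub n q}|)%N
    & circuit_out f g c = disjoint_prod_sum f g].
Proof.
have [wf_t size_t _] := tree_spec (leqnn (depth n)).
have [wf_g size_g loc_f loc_g] := g_inputs_spec.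
rewrite /full_circuit disjoint_prod_sumE.
case E: (enum {: ksub n q}) => [|Y0 Ys] /=.
  have le_q : (q <= #|[set: 'I_n]|)%N by rewrite cardsT card_ord (leq_trans (leq_addl p q)).
  have [Y _] := exists_ksub le_q.
  by have := mem_enum {: ksub n q} Y; rewrite E.
have card_q : #|{: ksub n q}| = (size Ys).+1 by rewrite cardE E.
set c1 := rcons _ _.
have [lt_f0 val_f0] := loc_f Y0; have [lt_g0 val_g0] := loc_g Y0.
have wf_c1 : wf_circuit c1 by rewrite wf_circuit_rcons wf_g /= lt_f0 lt_g0.
have last_c1 : (size (g_inputs n p q).1).+1 = size c1 by rewrite size_rcons.
have loc1 Y : Y \in Ys ->
    located f g c1 (Some (f_gate p Y)) (trace_sum (depth n) (val Y, set0)) true /\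
    located f g c1 (Some (g_gate p Y)) (g Y) true.
  by move=> _; rewrite /c1 -cats1; split; apply: located_cat.
have [wf size_c pos out] := product_chain_spec wf_c1 last_c1 loc1.
split=> //.
  rewrite size_c -last_c1 size_g card_q.
  apply: leq_trans (leq_add size_t (leqnn (3 * (size Ys).+1))).
  by move: (size (tree n p q (depth n)).1) (size Ys) => a k; lia.
by rewrite /circuit_out out big_cons /c1 nth_vals_last /= val_f0 val_g0.
Qed.

End Correctness.

Lemma leq_expn2r a b e : (a <= b)%N -> (a ^ e <= b ^ e)%N.
Proof. by case: e => [//|e] le_ab; rewrite leq_exp2r. Qed.

Lemma bin_fact_le a m : ('C(a, m) * m`! <= a ^ m)%N.
Proof.
rewrite bin_ffact; elim: m a => [|m IH] a; first by rewrite ffactn0.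
by rewrite ffactnS expnS leq_mul // (leq_trans (IH _)) // leq_expn2r // leq_pred.
Qed.

(* [k ^ j <= 4 ^ k * j!] for [j <= k], as [k ^ j <= (k + j) ^_ j] and
   [C(k + j, j) <= 2 ^ (k + j)] *)
Lemma expn_le_fact k j : (j <= k)%N -> (k ^ j <= 4 ^ k * j`!)%N.
Proof.
move=> le_jk; have ffact_ge : (k ^ j <= (k + j) ^_ j)%N.
  elim: j {le_jk} => [|j IH]; first by rewrite ffactn0.
  by rewrite addnS ffactSS expnS leq_mul // ltnW // ltnS leq_addr.
apply: leq_trans ffact_ge _; rewrite -bin_ffact leq_mul2r; apply/orP; right.
apply: leq_trans (_ : 2 ^ (k + j) <= _)%N.
  have := expnDn 1 1 (k + j); rewrite addn1 => ->.
  by rewrite (bigD1 (Ordinal (leq_addl k j : j < (k + j).+1)%N)) //= !exp1n !muln1 leq_addr.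
by rewrite (_ : 4 = 2 ^ 2) // -expnM leq_exp2l // mul2n -addnn leq_add2l.
Qed.

Lemma binomial_pair_le n t s M k j :
  (t * s <= 2 * n)%N -> (0 < s)%N -> (M <= n)%N -> (M <= k * s)%N ->
  ('C(t, k) * 'C(M, j) * (maxn k j)`! <= 8 ^ maxn k j * n ^ maxn k j)%N.
Proof.
move=> le_ts s_gt0 le_Mn le_Mks.
have le_t : (t <= 2 * n)%N by rewrite (leq_trans _ le_ts) // leq_pmulr.
have binom_le : ('C(t, k) * 'C(M, j) * (k`! * j`!) <= t ^ k * M ^ j)%N.
  by rewrite mulnACA leq_mul // bin_fact_le.
have eight : (8 ^ k * n ^ k = (2 * n) ^ k * 4 ^ k)%N by rewrite -!expnMn; congr (_ ^ k); lia.
case: (leqP j k) => [le_jk|/ltnW le_kj].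
  rewrite -(leq_pmul2r (fact_gt0 j)) -mulnA (leq_trans binom_le) //.
  have -> : (t ^ k = t ^ (k - j) * t ^ j)%N by rewrite -expnD subnK.
  apply: (@leq_trans (t ^ (k - j) * (t * s) ^ j * k ^ j)).
    rewrite -!mulnA leq_mul2l -!expnMn leq_expn2r ?orbT //.
    by rewrite -mulnA leq_mul2l mulnC le_Mks orbT.
  rewrite eight (_ : (2 * n) ^ k = (2 * n) ^ (k - j) * (2 * n) ^ j)%N;
    last by rewrite -expnD subnK.
  rewrite -!mulnA; apply: leq_mul; first exact: leq_expn2r.
  by apply: leq_mul; [exact: leq_expn2r | exact: expn_le_fact].
rewrite -(leq_pmul2r (fact_gt0 k)).
rewrite (_ : 'C(t, k) * 'C(M, j) * j`! * k`! = 'C(t, k) * 'C(M, j) * (k`! * j`!))%N;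
  last by ring.
apply: leq_trans binom_le _.
have -> : (M ^ j = M ^ k * M ^ (j - k))%N by rewrite -expnD subnKC.
apply: (@leq_trans ((t * s) ^ k * k ^ k * n ^ (j - k))).
  rewrite mulnA -expnMn; apply: leq_mul; last exact: leq_expn2r.
  by rewrite -expnMn leq_expn2r // -mulnA leq_mul2l (mulnC s) le_Mks orbT.
apply: (@leq_trans (8 ^ k * n ^ k * k`! * n ^ (j - k))).
  rewrite leq_mul2r eight -mulnA; apply/orP; right.
  by apply: leq_mul; [exact: leq_expn2r | exact: expn_le_fact].
rewrite mulnAC -(mulnA (8 ^ k)) -expnD subnKC //.
by apply: leq_mul => //; apply: leq_mul => //; apply: leq_pexp2l.
Qed.

(* the constant of the theorem is [3 + 8 KK]; [128 ^ m <= KK * m!] *)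
Definition KK := (128 ^ 128)%N.

Lemma expn_le_KK_fact m : (128 ^ m <= KK * m`!)%N.
Proof.
elim: m => [|m IH]; first by rewrite expn0 fact0 muln1 expn_gt0.
case: (leqP m.+1 128) => le_m.
  by rewrite (leq_trans (leq_pexp2l _ le_m)) // leq_pmulr // fact_gt0.
by rewrite expnS factS mulnCA leq_mul // ltnW.
Qed.

Lemma binomial_term_le n t s M k j :
  (t * s <= 2 * n)%N -> (0 < s)%N -> (M <= n)%N -> (M <= k * s)%N ->
  ('C(t, k) * 4 ^ k * 'C(M, j) * 2 ^ k * 2 ^ j <= KK * n ^ maxn k j)%N.
Proof.
move=> le_ts s_gt0 le_Mn le_Mks; set m := maxn k j.
have powers : (4 ^ k * 2 ^ k * 2 ^ j <= 16 ^ m)%N.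
  rewrite (_ : 16 = 4 * 2 * 2)%N // !expnMn !leq_mul ?leq_exp2l ?leq_maxl ?leq_maxr //.
rewrite -(leq_pmul2r (fact_gt0 m)).
rewrite (_ : 'C(t, k) * 4 ^ k * 'C(M, j) * 2 ^ k * 2 ^ j * m`! =
             'C(t, k) * 'C(M, j) * m`! * (4 ^ k * 2 ^ k * 2 ^ j))%N; last by ring.
apply: (@leq_trans (8 ^ m * n ^ m * 16 ^ m)).
  exact: leq_mul (binomial_pair_le j le_ts s_gt0 le_Mn le_Mks) powers.
rewrite (_ : 8 ^ m * n ^ m * 16 ^ m = 128 ^ m * n ^ m)%N; last by rewrite mulnAC -expnMn.
by rewrite mulnAC leq_mul2r expn_le_KK_fact orbT.
Qed.

(* never unfold [KK]: conversion would try to compute [128 ^ 128] *)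
Global Opaque KK.

Lemma sum_geometric_le (y : nat -> nat) A b :
  (forall j, j < b -> y j * 2 ^ j <= A) -> \sum_(j < b) y j <= 2 * A.
Proof.
move=> le_y; suff scaled : (\sum_(j < b) y j) * 2 ^ b + 2 * A <= 2 * A * 2 ^ b.
  by rewrite -(leq_pmul2r (expn_gt0 2 b)) (leq_trans _ scaled) // mulnC leq_addr.
elim: b le_y => [|b IH] le_y; first by rewrite big_ord0 mul0n add0n expn0 muln1.
have := IH (fun j lt_j => le_y j (ltnW lt_j)); have := le_y b (ltnSn b).
rewrite big_ord_recr /= expnS; move: (\sum_(i < b) y i) (y b) (2 ^ b) => s yb e.
by rewrite mulnDl !mulnA !(mulnAC _ 2); move: (s * e) (yb * e) (A * e); lia.
Qed.

Lemma double_sum_geometric_le (x : nat -> nat -> nat) A a b :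
  (forall k j, k < a -> j < b -> x k j * 2 ^ k * 2 ^ j <= A) ->
  \sum_(k < a) \sum_(j < b) x k j <= 4 * A.
Proof.
move=> le_x; rewrite (_ : 4 = 2 * 2) // -mulnA.
apply: (@sum_geometric_le (fun k => \sum_(j < b) x k j)) => k lt_k.
rewrite big_distrl; apply: (@sum_geometric_le (fun j => x k j * 2 ^ k)) => j lt_j.
exact: le_x.
Qed.

Lemma leq_sum_pred (T : finType) (P Q : pred T) (F : T -> nat) :
  (forall x, P x -> Q x) -> \sum_(x | P x) F x <= \sum_(x | Q x) F x.
Proof.
move=> PQ; rewrite (big_mkcond P) (big_mkcond Q) leq_sum // => x _.
by case Px: (P x); rewrite ?(PQ x Px).
Qed.

Lemma sum_by_stat (T : finType) (P : pred T) a (F W : T -> nat) :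
  (forall x, P x -> F x < a) ->
  \sum_(x | P x) W x <= \sum_(k < a) \sum_(x | P x && (F x == k)) W x.
Proof.
move=> lt_F; rewrite (exchange_big_dep P) /=; last by move=> i x _ /andP[].
rewrite leq_sum // => x Px.
by rewrite (bigD1 (Ordinal (lt_F x Px))) //= ?Px ?eqxx //= leq_addr.
Qed.

Lemma size_filter_enum (T : finType) (A P : pred T) :
  size [seq x <- enum A | P x] = \sum_(x in A | P x) 1.
Proof. by rewrite size_filter -sum1_count big_enum_cond. Qed.

Lemma sum_pair (T : finType) (P : pred T) (F : T * T -> nat) :
  \sum_(k : T * T | P k.1) F k = \sum_(B | P B) \sum_(Z : T) F (B, Z).
Proof. by rewrite pair_big_dep; apply: eq_big => [[B Z]|[B Z]] //=; rewrite andbT. Qed.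

Lemma count_subsets (T : finType) (A : {set T}) : \sum_(B : {set T} | B \subset A) 1 = 2 ^ #|A|.
Proof. by rewrite sum1_card -card_powerset /powerset cardsE. Qed.

Lemma count_subsets_card (T : finType) (A : {set T}) k :
  \sum_(B : {set T} | (B \subset A) && (#|B| == k)) 1 = 'C(#|A|, k).
Proof. by rewrite sum1_card -cards_draws cardsE. Qed.

Lemma sum_fibres (I J : finType) (P : pred I) (h : I -> J) :
  \sum_(j : J) \sum_(i | P i && (h i == j)) 1 = \sum_(i | P i) 1.
Proof.
rewrite (exchange_big_dep P) /=; last by move=> j i _ /andP[].
apply: eq_bigr => i Pi; rewrite (big_pred1 (h i)) // => j /=.
by rewrite Pi eq_sym.
Qed.

Section Cost.
Variables (n p q : nat).

Lemma card_ksub_le k : #|{: ksub n k}| <= n ^ k.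
Proof.
rewrite card_sig -cardsE card_draws card_ord.
by rewrite (leq_trans _ (bin_fact_le n k)) // leq_pmulr // fact_gt0.
Qed.

(* level 0 has the two node sets [set0] and [level 0]; each [X] feeds one key of each *)
Lemma root_cost_le : root_cost n p q <= 2 * #|{: ksub n p}|.
Proof.
rewrite /root_cost /keys big_enum /=.
under eq_bigr => k _ do rewrite /root_sources size_filter_enum.
apply: (@leq_trans (\sum_(k : key n | k.1 \subset level n 0)
                       \sum_(X : ksub n p | matches 0 k X) 1)).
  by apply: leq_sum_pred => k; rewrite inE => /and4P[].
rewrite (sum_pair (fun B : {set 'I_n} => B \subset level n 0)).
rewrite (eq_bigr (fun _ => #|{: ksub n p}| * 1)); last first.
  move=> B _; rewrite muln1 (exchange_big_dep predT) //= -sum1_card; apply: eq_bigr => X _.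
  by rewrite (big_pred1 (val X :&: leaves 0 B)) // => Z; rewrite /matches /= eq_sym.
rewrite -big_distrr /= count_subsets mulnC leq_mul2r.
by rewrite (leq_trans (leq_pexp2l _ (card_level n 0))) ?orbT.
Qed.

Definition node_set l (B : {set 'I_n}) := (B \subset level n l) && (#|B| <= q).

Definition trace_bound l m := \sum_(j < p.+1) 'C(minn n (m * width n l), j).

Lemma count_keys l B :
  \sum_(k : key n | key_ok p q l k && (k.1 == B)) 1 <= trace_bound l #|B|.
Proof.
pose small (Z : {set 'I_n}) := (Z \subset leaves l B) && (#|Z| <= p).
apply: (@leq_trans (\sum_(k : key n | (k.1 == B) && small k.2) 1)).
  apply: leq_sum_pred => -[B0 Z] /andP[/and4P[_ _ sub_Z card_Z] /= /eqP eB].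
  by rewrite eB eqxx /small -eB sub_Z card_Z.
rewrite -(pair_big_dep (fun B0 => B0 == B) (fun _ Z => small Z) (fun _ _ => 1)).
rewrite (big_pred1 B) //=.
apply: leq_trans (@sum_by_stat _ small p.+1 (fun Z => #|Z|) (fun _ => 1) _) _.
  by move=> Z /andP[_]; rewrite ltnS.
rewrite /trace_bound; apply: leq_sum => j _.
apply: (@leq_trans (\sum_(Z : {set 'I_n} | (Z \subset leaves l B) && (#|Z| == j)) 1)).
  by apply: leq_sum_pred => Z /andP[/andP[-> _] ->].
rewrite count_subsets_card leq_bin2l // leq_min card_leaves andbT.
by rewrite (leq_trans (max_card _)) ?card_ord.
Qed.

Lemma count_children (P : pred {set 'I_n}) (B : {set 'I_n}) :
  \sum_(B' | P B' && (parents B' == B)) 1 <= 4 ^ #|B|.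
Proof.
apply: (@leq_trans (\sum_(B' : {set 'I_n} | B' \subset @parent n @^-1: B) 1)).
  by apply: leq_sum_pred => B' /andP[_ /eqP<-]; apply/subsetP => x x_B'; rewrite inE imset_f.
by rewrite count_subsets (_ : 4 = 2 ^ 2) // -expnM leq_exp2l // mulnC card_children.
Qed.

Lemma count_node_sets l k : \sum_(B | node_set l B && (#|B| == k)) 1 <= 'C(2 ^ l, k).
Proof.
apply: (@leq_trans (\sum_(B : {set 'I_n} | (B \subset level n l) && (#|B| == k)) 1)).
  by apply: leq_sum_pred => B /andP[/andP[-> _] ->].
by rewrite count_subsets_card leq_bin2l // card_level.
Qed.

(* A key of level [l+1] with nodes [B'] has at most one source per level-[l]
   key with nodes [parents B']; grouping the [B'] by their parents gives: *)
Lemma layer_cost_parents l : l < depth n ->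
  layer_cost n p q l <= \sum_(B | node_set l B) 4 ^ #|B| * trace_bound l #|B|.
Proof.
move=> lt_l; rewrite /layer_cost /keys big_enum /=.
under eq_bigr => k _ do rewrite /sources /keys size_filter_enum.
apply: (@leq_trans
    (\sum_(B' | node_set l.+1 B') \sum_(k : key n | key_ok p q l k && (k.1 == parents B')) 1)).
  apply: (@leq_trans (\sum_(k' : key n | node_set l.+1 k'.1)
      \sum_(k in [pred k | key_ok p q l k] |
              (k.1 == parents k'.1) && (k.2 :&: leaves l.+1 k'.1 == k'.2)) 1)).
    by apply: leq_sum_pred => k'; rewrite inE /key_ok /node_set => /and4P[-> -> _ _].
  rewrite sum_pair; apply: leq_sum => B' _.
  rewrite -(sum_fibres (fun k : key n => key_ok p q l k && (k.1 == parents B'))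
                      (fun k => k.2 :&: leaves l.+1 B')).
  by apply: leq_sum => Z _; apply: eq_leq; apply: eq_bigl => k; rewrite inE andbA.
apply: (@leq_trans (\sum_(B' | node_set l.+1 B') trace_bound l #|parents B'|)).
  by apply: leq_sum => B' _; apply: count_keys.
rewrite (partition_big (@parents n) (node_set l)) /=; last first.
  move=> B' /andP[lvl_B' card_B']; rewrite /node_set parents_level //=.
  exact: leq_trans (leq_imset_card _ _) card_B'.
apply: leq_sum => B _.
rewrite (eq_bigr (fun _ => trace_bound l #|B| * 1)); last first.
  by move=> B' /andP[_ /eqP->]; rewrite muln1.
by rewrite -big_distrr /= mulnC leq_mul2r count_children orbT.
Qed.

Lemma layer_cost_le l : 0 < n -> l < depth n -> layer_cost n p q l <= 4 * (KK * n ^ maxn p q).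
Proof.
move=> n_gt0 lt_l; apply: leq_trans (layer_cost_parents lt_l) _.
pose x k j := 'C(2 ^ l, k) * 4 ^ k * 'C(minn n (k * width n l), j).
apply: (@leq_trans (\sum_(k < q.+1) \sum_(j < p.+1) x k j)).
  apply: leq_trans (@sum_by_stat _ (node_set l) q.+1 (fun B : {set 'I_n} => #|B|) _ _) _.
    by move=> B /andP[_]; rewrite ltnS.
  apply: leq_sum => k _.
  rewrite (eq_bigr (fun _ => 4 ^ k * trace_bound l k * 1)); last first.
    by move=> B /andP[_ /eqP->]; rewrite muln1.
  rewrite -big_distrr /= mulnC; apply: leq_trans (leq_mul (count_node_sets l k) (leqnn _)) _.
  by rewrite /trace_bound !big_distrr /= leq_sum // => j _; rewrite /x mulnA.
apply: double_sum_geometric_le => k j lt_k lt_j.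
have w_gt0 : 0 < width n l by rewrite expn_gt0.
rewrite /x; apply: leq_trans (binomial_term_le j (level_width n_gt0 (ltnW lt_l))
                                w_gt0 (geq_minl _ _) (geq_minr _ _)) _.
rewrite leq_mul2l leq_pexp2l ?orbT //; move: lt_k lt_j; rewrite !ltnS => le_k le_j.
by rewrite geq_max !leq_max le_k le_j !orbT.
Qed.

End Cost.

(* [log n] levels of cost [O(n ^ max(p, q))] each, plus [O(n ^ p + n ^ q)] for
   the inputs, the root level and the final products *)
Lemma full_circuit_size n p q : 0 < p -> 0 < q -> p + q <= n ->
  size (full_circuit n p q) <= (3 + 8 * KK) * (n ^ p + n ^ q) * trunc_log 2 n.
Proof.
move=> p_gt0 q_gt0 le_pq_n.
have n_gt1 : 1 < n by rewrite (leq_trans _ le_pq_n) // -(addn1 1) leq_add.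
(* the circuit does not depend on the semiring: read its size off the spec over [nat] *)
have [_ _ size_c _] := full_circuit_spec (fun _ : ksub n p => 0) (fun _ : ksub n q => 0) le_pq_n.
set T := trunc_log 2 n; have T_gt0 : 0 < T by rewrite trunc_log_gt0.
have depth_le : depth n <= 2 * T by rewrite /depth -/T mul2n -addnn -addn1 leq_add2l.
have max_le : n ^ maxn p q <= n ^ p + n ^ q.
  by case: (leqP p q) => _; rewrite ?leq_addl ?leq_addr.
have layers_le : \sum_(i < depth n) layer_cost n p q i <= 8 * (KK * (n ^ p + n ^ q) * T).
  apply: (@leq_trans (depth n * (4 * (KK * n ^ maxn p q)))).
    rewrite -[X in X * _](card_ord (depth n)) -sum_nat_const.
    by apply: leq_sum => i _; apply: layer_cost_le (ltnW n_gt1) (ltn_ord i).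
  have -> : 8 * (KK * (n ^ p + n ^ q) * T) = 2 * T * (4 * (KK * (n ^ p + n ^ q))) by ring.
  exact: leq_mul depth_le (leq_mul (leqnn 4) (leq_mul (leqnn KK) max_le)).
have le_T : n ^ p + n ^ q <= (n ^ p + n ^ q) * T by rewrite leq_pmulr.
rewrite (_ : (3 + 8 * KK) * _ * T = 3 * ((n ^ p + n ^ q) * T) + 8 * (KK * (n ^ p + n ^ q) * T));
  last by ring.
have := root_cost_le n p q; have := card_ksub_le n p; have := card_ksub_le n q.
move: size_c layers_le le_T.
move: (size _) (root_cost _ _ _) (\sum_(i < _) _) #|{: ksub n p}| #|{: ksub n q}| => s r l cp cq.
move: (n ^ p) (n ^ q) ((n ^ p + n ^ q) * T) (KK * (n ^ p + n ^ q) * T) => a b V W.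
lia.
Qed.

Theorem mainTheorem10 (S : pzSemiRingType) :
  exists C : nat, forall n p q : nat,
    (0 < p)%N -> (0 < q)%N -> (p + q <= n)%N ->
    exists c : circuit n p q,
      [/\ wf_circuit c, (0 < size c)%N,
          (size c <= C * (n ^ p + n ^ q) * trunc_log 2 n)%N &
          forall (f : ksub n p -> S) (g : ksub n q -> S),
            circuit_out f g c = disjoint_prod_sum f g].
Proof.
exists (3 + 8 * KK) => n p q p_gt0 q_gt0 le_pq_n; exists (full_circuit n p q).
have [wf_c pos_c _ _] :=
  full_circuit_spec (fun _ : ksub n p => 0%R : S) (fun _ : ksub n q => 0%R : S) le_pq_n.
split=> // [|f g]; first exact: full_circuit_size.
by have [_ _ _ ->] := full_circuit_spec f g le_pq_n.
Qed.
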